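(* Fix $\varepsilon>0$ and $\alpha>0$, and let $(\sigma_K)$ be a sequence with $K^{-1/2+\alpha}\ll\sigma_K\ll1$. Let $C_1>0$, $C_2\ge0$ and let $(Z_n)$ be a Markov chain on $\mathbb N_0$ with transition probabilities $p(0,1)=1$ and, for $i\ge1$, $p(i,i+1)=\tfrac12-C_1iK^{-1}+C_2\varepsilon\sigma_K$, $p(i,i-1)=\tfrac12+C_1iK^{-1}-C_2\varepsilon\sigma_K$. Let $\tau_i$ be the first hitting time of level $i$ by $Z$ and $\mathbb P_a$ the law of $Z$ started at $Z_0=a$. Then for all $M\ge 8C_2/C_1$ and all $a\le\tfrac13M\varepsilon\sigma_KK$, $$\lim_{K\to\infty}e^{K^{2\alpha}}\,\mathbb P_a\big[\tau_{\lceil M\varepsilon\sigma_KK\rceil}<\tau_0\big]=0.$$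
   Context: $f(K)\ll g(K)$ means $f(K)/g(K)\to0$ as $K\to\infty$. *)

From Stdlib Require Import Reals ZArith Arith.
From Coquelicot Require Import Coquelicot.
Open Scope R_scope.

Definition Rceil_Z (x : R) : Z := (- Int_part (- x))%Z.

Definition up_prob (C1 C2 eps : R) (sigma : nat -> R) (K i : nat) : R :=
  match i with
  | O => 1
  | S _ => / 2 - C1 * INR i / INR K + C2 * eps * sigma K
  end.

(* hit_within p N n i = P_i[ tau_N <= n /\ tau_N < tau_0 ] for the nearest-neighbour
   chain on N_0 with up-probability p i and down-probability 1 - p i
   (first-step analysis on the path space). *)
Fixpoint hit_within (p : nat -> R) (N n i : nat) : R :=
  match n with
  | O => if Nat.eqb i 0 then 0 else if Nat.eqb i N then 1 else 0
  | S m =>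
      if Nat.eqb i 0 then 0 else if Nat.eqb i N then 1 else
      p i * hit_within p N m (S i) + (1 - p i) * hit_within p N m (pred i)
  end.

(* P_a[ tau_N < tau_0 ] = lim_n P_a[ tau_N <= n, tau_N < tau_0 ]
   (continuity from below of the probability measure). *)
Definition hit_before_zero (p : nat -> R) (N a : nat) : R :=
  real (Lim_seq (fun n => hit_within p N n a)).

From Stdlib Require Import Reals ZArith Arith Lra Lia.
From Coquelicot Require Import Coquelicot.
Open Scope R_scope.

(* The chain is a birth-death chain, so P_a[tau_N < tau_0] = S(a)/S(N) for its
   scale function S(n) = sum_{m<n} prod_{t<=m} q_t/p_t.  The drift towards 0
   grows linearly in t, hence so do the odds q_t/p_t; this makes the products
   supermultiplicative and gives S(a)/S(N) <= 1 / prod_{t<=N-a} q_t/p_t.  With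
   q_t/p_t >= exp(4 d_t - 8 d_t^2), d_t = C1 t/K - C2 eps sigma_K, and
   N - a >= 2N/3, that product is at least exp(C1 M^2 eps^2 sigma_K^2 K / 3),
   while K^{-1/2+alpha} << sigma_K says exactly that K^{2 alpha} << sigma_K^2 K. *)

Lemma exp_le_mono x y : x <= y -> exp x <= exp y.
Proof. intros [Hlt | ->]; [left; apply exp_increasing | right]; auto. Qed.

Lemma exp_le_inv_of_le_exp_opp y z : 0 < z -> z <= exp (- y) -> exp y <= / z.
Proof.
  intros Hz H. rewrite exp_Ropp in H. rewrite <- (Rinv_inv (exp y)).
  apply Rinv_le_contravar; assumption.
Qed.

Lemma real_Lim_seq_between (u : nat -> R) lo hi :
  (forall n, lo <= u n <= hi) -> lo <= real (Lim_seq u) <= hi.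
Proof.
  intros Hu.
  assert (Hlo : Rbar_le (Lim_seq (fun _ => lo)) (Lim_seq u))
    by (apply Lim_seq_le_loc; exists O; intros; apply Hu).
  assert (Hhi : Rbar_le (Lim_seq u) (Lim_seq (fun _ => hi)))
    by (apply Lim_seq_le_loc; exists O; intros; apply Hu).
  rewrite Lim_seq_const in Hlo, Hhi.
  destruct (Lim_seq u); simpl in *; easy.
Qed.

Lemma eventually_lt_of_lim_0 (u : nat -> R) e :
  is_lim_seq u 0 -> 0 < e -> eventually (fun n => u n < e).
Proof.
  intros Hu He. apply is_lim_seq_spec in Hu.
  apply (filter_imp (fun n => Rabs (u n - 0) < e)); [|exact (Hu (mkposreal e He))].
  intros n Hn. rewrite Rminus_0_r in Hn. apply Rabs_def2 in Hn. lra.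
Qed.

Lemma Rceil_Z_to_nat_bounds x : 0 <= x -> x <= INR (Z.to_nat (Rceil_Z x)) <= x + 1.
Proof.
  intros Hx. unfold Rceil_Z, Int_part.
  destruct (archimed (- x)) as [Hup1 Hup2].
  assert (Hz : (0 <= - (up (- x) - 1))%Z).
  { apply le_IZR. rewrite opp_IZR, minus_IZR. simpl. lra. }
  rewrite INR_IZR_INZ, Z2Nat.id by exact Hz.
  rewrite opp_IZR, minus_IZR. simpl. lra.
Qed.

Lemma Rpower_ge1 k y : 1 <= k -> 0 <= y -> 1 <= Rpower k y.
Proof.
  intros Hk Hy. unfold Rpower. rewrite <- exp_0. apply exp_le_mono.
  apply Rmult_le_pos; [exact Hy|]. rewrite <- ln_1. apply ln_le; lra.
Qed.

Lemma Rpower_two_mul_split alpha k s : 0 < k -> 0 < s ->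
  Rpower k (2 * alpha) = (Rpower k (- / 2 + alpha) / s) ^ 2 * (s ^ 2 * k).
Proof.
  intros Hk Hs.
  replace (2 * alpha) with ((- / 2 + alpha) + (- / 2 + alpha) + 1) by field.
  rewrite !Rpower_plus, Rpower_1 by exact Hk. field. lra.
Qed.

Lemma exp_sub_le r c T : 0 < c -> 0 < T -> r <= c / 2 -> 1 <= r * T ->
  exp (r * T - c * T) <= 2 / c * r.
Proof.
  intros Hc HT Hr HrT.
  assert (Hr0 : 0 < r) by nra.
  eapply Rle_trans; [apply exp_le_mono with (y := - (c / 2 * T)); nra|].
  rewrite exp_Ropp.
  eapply Rle_trans; [apply Rinv_le_contravar; [|apply exp_ineq1_le]; nra|].
  apply Rmult_le_reg_l with (1 + c / 2 * T); [nra|].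
  rewrite Rinv_r by nra.
  replace ((1 + c / 2 * T) * (2 / c * r)) with (2 / c * r + r * T) by (field; lra).
  assert (0 < 2 / c * r) by (apply Rmult_lt_0_compat; [apply Rdiv_lt_0_compat|]; lra).
  lra.
Qed.

Section BirthDeathChain.

Variable p : nat -> R.

Definition odds (i : nat) : R := (1 - p i) / p i.

Fixpoint odds_prod (m : nat) : R :=
  match m with O => 1 | S j => odds_prod j * odds (S j) end.

Fixpoint scale (n : nat) : R :=
  match n with O => 0 | S m => scale m + odds_prod m end.

Lemma odds_prod_gt0 m : (forall t, (1 <= t <= m)%nat -> 0 < odds t) -> 0 < odds_prod m.
Proof.
  induction m as [|m IH]; intros Hodds; simpl; [lra|].
  apply Rmult_lt_0_compat; [apply IH; intros t Ht|]; apply Hodds; lia.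
Qed.

Lemma scale_ge0 n : (forall t, (1 <= t < n)%nat -> 0 < odds t) -> 0 <= scale n.
Proof.
  induction n as [|n IH]; intros Hodds; simpl; [lra|].
  assert (0 <= scale n) by (apply IH; intros; apply Hodds; lia).
  assert (0 < odds_prod n) by (apply odds_prod_gt0; intros; apply Hodds; lia).
  lra.
Qed.

Lemma scale_gt0 n : (1 <= n)%nat -> (forall t, (1 <= t < n)%nat -> 0 < odds t) -> 0 < scale n.
Proof.
  destruct n as [|n]; intros Hn Hodds; [lia|]; simpl.
  assert (0 <= scale n) by (apply scale_ge0; intros; apply Hodds; lia).
  assert (0 < odds_prod n) by (apply odds_prod_gt0; intros; apply Hodds; lia).
  lra.
Qed.

Lemma scale_harmonic i : 0 < p (S i) ->
  p (S i) * scale (S (S i)) + (1 - p (S i)) * scale i = scale (S i).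
Proof. intros Hp. simpl. unfold odds. field. lra. Qed.

Lemma odds_prod_ge_exp (G : nat -> R) m :
  (forall t, (t < m)%nat -> exp (G (S t) - G t) <= odds (S t)) ->
  exp (G m - G O) <= odds_prod m.
Proof.
  induction m as [|m IH]; intros HG; simpl.
  - rewrite Rminus_diag, exp_0. lra.
  - replace (G (S m) - G O) with ((G m - G O) + (G (S m) - G m)) by ring.
    rewrite exp_plus.
    apply Rmult_le_compat; try (left; apply exp_pos); [apply IH; intros|]; apply HG; lia.
Qed.

Lemma hit_before_zero_0 N : hit_before_zero p N 0 = 0.
Proof.
  unfold hit_before_zero. rewrite (Lim_seq_ext _ (fun _ => 0)).
  - now rewrite Lim_seq_const.
  - now intros [|n].
Qed.

Section HittingLevel.

Variable N : nat.
Hypothesis N_ge1 : (1 <= N)%nat.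
Hypothesis p_prob : forall i, (1 <= i <= N)%nat -> 0 < p i < 1.

Lemma odds_gt0 t : (1 <= t <= N)%nat -> 0 < odds t.
Proof. intros Ht. destruct (p_prob t Ht). apply Rdiv_lt_0_compat; lra. Qed.

Lemma scale_level_gt0 : 0 < scale N.
Proof. apply scale_gt0; [exact N_ge1 | intros; apply odds_gt0; lia]. Qed.

Lemma hit_within_le_scale_ratio n i :
  (i <= N)%nat -> 0 <= hit_within p N n i <= scale i / scale N.
Proof.
  pose proof scale_level_gt0 as HSN.
  revert i; induction n as [|n IH]; intros i Hi; simpl hit_within;
    destruct (Nat.eqb_spec i 0) as [->|Hi0];
    try (simpl scale; unfold Rdiv; rewrite Rmult_0_l; lra);
    destruct (Nat.eqb_spec i N) as [->|HiN];
    try (split; [lra | right; field; lra]).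
  - split; [lra|]. apply Rdiv_le_0_compat; [|exact HSN].
    apply scale_ge0; intros; apply odds_gt0; lia.
  - destruct i as [|j]; [lia|]. simpl pred.
    destruct (p_prob (S j)) as [Hp0 Hp1]; [lia|].
    destruct (IH (S (S j))) as [Hup0 Hup]; [lia|].
    destruct (IH j) as [Hdown0 Hdown]; [lia|].
    assert (Hmean : scale (S j) / scale N =
      p (S j) * (scale (S (S j)) / scale N) + (1 - p (S j)) * (scale j / scale N)).
    { rewrite <- (scale_harmonic j Hp0). field. lra. }
    rewrite Hmean. split; nra.
Qed.

Hypothesis odds_mono : forall s t, (1 <= s <= t)%nat -> (t <= N)%nat -> odds s <= odds t.

Lemma odds_prod_supermul j m :
  (j + m <= N)%nat -> odds_prod j * odds_prod m <= odds_prod (j + m).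
Proof.
  induction m as [|m IH]; intros Hjm.
  - simpl. rewrite Nat.add_0_r. lra.
  - rewrite Nat.add_succ_r. simpl. rewrite <- Rmult_assoc.
    assert (0 < odds_prod j) by (apply odds_prod_gt0; intros; apply odds_gt0; lia).
    assert (0 < odds_prod m) by (apply odds_prod_gt0; intros; apply odds_gt0; lia).
    assert (0 < odds (S m)) by (apply odds_gt0; lia).
    apply Rmult_le_compat; [nra | lra | apply IH; lia | apply odds_mono; lia].
Qed.

Lemma scale_add_ge m a :
  (m + a <= N)%nat -> odds_prod m * scale a <= scale (m + a) - scale m.
Proof.
  induction a as [|a IH]; intros Hma.
  - simpl. rewrite Nat.add_0_r. lra.
  - rewrite Nat.add_succ_r. simpl.
    pose proof (IH ltac:(lia)). pose proof (odds_prod_supermul m a ltac:(lia)). nra.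
Qed.

Lemma hit_before_zero_le_inv_odds_prod a :
  (a <= N)%nat -> 0 <= hit_before_zero p N a <= / odds_prod (N - a).
Proof.
  intros Ha.
  pose proof scale_level_gt0 as HSN.
  assert (Hr : 0 < odds_prod (N - a))
    by (apply odds_prod_gt0; intros; apply odds_gt0; lia).
  assert (0 <= scale (N - a)) by (apply scale_ge0; intros; apply odds_gt0; lia).
  pose proof (scale_add_ge (N - a) a ltac:(lia)) as Hadd.
  replace (N - a + a)%nat with N in Hadd by lia.
  assert (Hratio : scale a / scale N <= / odds_prod (N - a)).
  { apply Rmult_le_reg_r with (scale N * odds_prod (N - a)); [nra|].
    replace (scale a / scale N * (scale N * odds_prod (N - a)))
      with (odds_prod (N - a) * scale a) by (field; lra).
    replace (/ odds_prod (N - a) * (scale N * odds_prod (N - a)))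
      with (scale N) by (field; lra).
    lra. }
  assert (Hhit : 0 <= hit_before_zero p N a <= scale a / scale N).
  { apply real_Lim_seq_between. intros n. now apply hit_within_le_scale_ratio. }
  lra.
Qed.

End HittingLevel.

End BirthDeathChain.

Lemma exp_le_drift_odds d :
  -/4 <= d <= /4 -> exp (4 * d - 8 * d ^ 2) <= (/2 + d) / (/2 - d).
Proof.
  intros Hd.
  assert (Hup : exp (2 * d / (1 + 2 * d)) <= 1 + 2 * d).
  { rewrite <- (Rinv_inv (1 + 2 * d)).
    apply exp_le_inv_of_le_exp_opp; [apply Rinv_0_lt_compat; lra|].
    eapply Rle_trans; [|apply exp_ineq1_le]. right; field; lra. }
  assert (Hdown : exp (2 * d) <= / (1 - 2 * d)).
  { apply exp_le_inv_of_le_exp_opp; [lra|].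
    eapply Rle_trans; [|apply exp_ineq1_le]. lra. }
  assert (Hexponent : 4 * d - 8 * d ^ 2 <= 2 * d / (1 + 2 * d) + 2 * d).
  { assert (Hgap : 2 * d / (1 + 2 * d) + 2 * d - (4 * d - 8 * d ^ 2)
                   = 4 * d ^ 2 * (1 + 4 * d) / (1 + 2 * d)) by (field; lra).
    assert (0 <= 4 * d ^ 2 * (1 + 4 * d) / (1 + 2 * d))
      by (apply Rdiv_le_0_compat; [apply Rmult_le_pos|]; nra).
    lra. }
  replace ((/2 + d) / (/2 - d)) with ((1 + 2 * d) * / (1 - 2 * d)) by (field; lra).
  eapply Rle_trans; [apply exp_le_mono, Hexponent|]. rewrite exp_plus.
  apply Rmult_le_compat; try (left; apply exp_pos); assumption.
Qed.

Lemma drift_odds_le d1 d2 :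
  -/2 < d1 <= d2 -> d2 < /2 -> (/2 + d1) / (/2 - d1) <= (/2 + d2) / (/2 - d2).
Proof.
  intros Hd1 Hd2.
  replace ((/2 + d1) / (/2 - d1)) with (-1 + / (/2 - d1)) by (field; lra).
  replace ((/2 + d2) / (/2 - d2)) with (-1 + / (/2 - d2)) by (field; lra).
  apply Rplus_le_compat_l, Rinv_le_contravar; lra.
Qed.

Lemma hit_before_zero_linear_drift (p : nat -> R) (b eta : R) (N a : nat) :
  0 <= b -> 0 <= eta -> b * INR N + eta <= /4 -> (1 <= N)%nat -> (a <= N)%nat ->
  (forall i, (1 <= i)%nat -> p i = /2 - (b * INR i - eta)) ->
  0 <= hit_before_zero p N a <=
  exp (- (INR (N - a) * (2 * b * INR (N - a) - 4 * eta - 8 * (b * INR N + eta) ^ 2))).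
Proof.
  intros Hb Heta HB HN Ha Hp.
  assert (Hd : forall t, (t <= N)%nat -> - eta <= b * INR t - eta <= b * INR N - eta).
  { intros t Ht. pose proof (pos_INR t). pose proof (le_INR _ _ Ht). nra. }
  assert (Hodds : forall t, (1 <= t)%nat ->
            odds p t = (/2 + (b * INR t - eta)) / (/2 - (b * INR t - eta))).
  { intros t Ht. unfold odds. rewrite Hp by exact Ht.
    replace (1 - (/2 - (b * INR t - eta))) with (/2 + (b * INR t - eta)) by lra.
    reflexivity. }
  assert (Hprob : forall i, (1 <= i <= N)%nat -> 0 < p i < 1).
  { intros i Hi. rewrite Hp by lia. pose proof (Hd i ltac:(lia)). lra. }
  assert (Hmono : forall s t, (1 <= s <= t)%nat -> (t <= N)%nat -> odds p s <= odds p t).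
  { intros s t Hst HtN. rewrite !Hodds by lia.
    pose proof (Hd s ltac:(lia)). pose proof (Hd t HtN).
    pose proof (le_INR s t ltac:(lia)).
    apply drift_odds_le; nra. }
  set (B := b * INR N + eta).
  set (G := fun t : nat => INR t * (2 * b * INR t - 4 * eta - 8 * B ^ 2)).
  assert (Hprod : exp (G (N - a)%nat - G O) <= odds_prod p (N - a)).
  { apply odds_prod_ge_exp. intros t Ht.
    rewrite Hodds by lia. pose proof (Hd (S t) ltac:(lia)) as Hdt.
    rewrite S_INR in Hdt |- *.
    eapply Rle_trans; [|apply exp_le_drift_odds; lra].
    apply exp_le_mono. unfold G. rewrite S_INR.
    assert (Hsq : (b * (INR t + 1) - eta) ^ 2 <= B ^ 2).
    { assert (- B <= b * (INR t + 1) - eta <= B) by (unfold B; nra). nra. }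
    pose proof (pos_INR t). nra. }
  replace (G O) with 0 in Hprod by (unfold G; simpl; ring).
  rewrite Rminus_0_r in Hprod.
  destruct (hit_before_zero_le_inv_odds_prod p N HN Hprob Hmono a Ha) as [H0 H1].
  split; [exact H0|]. eapply Rle_trans; [exact H1|].
  rewrite exp_Ropp. apply Rinv_le_contravar; [apply exp_pos | exact Hprod].
Qed.

Lemma up_prob_linear_drift C1 C2 eps sigma K i : (1 <= i)%nat ->
  up_prob C1 C2 eps sigma K i = / 2 - (C1 / INR K * INR i - C2 * eps * sigma K).
Proof. intros Hi. destruct i as [|i]; [lia|]. unfold up_prob, Rdiv. ring. Qed.

Section DecayOfHittingProbability.

Variables C1 C2 eps M : R.
Hypothesis C1_gt0 : 0 < C1.
Hypothesis C2_ge0 : 0 <= C2.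
Hypothesis eps_gt0 : 0 < eps.
Hypothesis M_gt0 : 0 < M.
Hypothesis M_large : 8 * C2 <= C1 * M.

Let A := C1 * M * eps + C1 + C2 * eps.
Let c := C1 * M ^ 2 * eps ^ 2 / 3.

Lemma drift_constant_gt0 : 0 < A.
Proof. unfold A. nra. Qed.

Lemma decay_rate_gt0 : 0 < c.
Proof.
  unfold c. assert (0 < M ^ 2 * eps ^ 2) by (apply Rmult_lt_0_compat; apply pow_lt; lra).
  nra.
Qed.

Lemma max_drift_le (s k : R) (N : nat) :
  0 < s -> s < 1 -> 1 <= s ^ 2 * k -> INR N <= M * eps * s * k + 1 ->
  C1 / k * INR N + C2 * eps * s <= A * s.
Proof.
  intros Hs Hs1 HT HN.
  assert (Hk : 0 < k) by nra.
  assert (Hinvk : / k <= s).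
  { apply Rmult_le_reg_r with k; [lra|]. rewrite Rinv_l by lra. nra. }
  assert (C1 / k * INR N <= C1 / k * (M * eps * s * k + 1)).
  { apply Rmult_le_compat_l; [apply Rdiv_le_0_compat|]; lra. }
  replace (C1 / k * (M * eps * s * k + 1)) with (C1 * M * eps * s + C1 * / k) in H
    by (field; lra).
  unfold A. nra.
Qed.

Lemma hit_before_zero_decay (p : nat -> R) (s k : R) (N a : nat) :
  0 < s -> s < 1 -> s < / (4 * A) -> s < C1 * M * eps / (24 * A ^ 2) -> 1 <= s ^ 2 * k ->
  M * eps * s * k <= INR N <= M * eps * s * k + 1 -> INR a <= / 3 * M * eps * s * k ->
  (forall i, (1 <= i)%nat -> p i = / 2 - (C1 / k * INR i - C2 * eps * s)) ->
  0 <= hit_before_zero p N a <= exp (- (c * (s ^ 2 * k))).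
Proof.
  intros Hs Hs1 HsA HsA2 HT HN Ha Hp.
  pose proof drift_constant_gt0 as HA.
  assert (Hk : 0 < k) by nra.
  replace (/ 3 * M * eps * s * k) with (/ 3 * (M * eps * s * k)) in Ha by ring.
  set (x := M * eps * s * k) in *.
  set (w := C1 * M * eps * s).
  assert (Hw : 0 < w) by (unfold w; repeat apply Rmult_lt_0_compat; lra).
  assert (Hx : 0 < x) by (unfold x; repeat apply Rmult_lt_0_compat; lra).
  assert (HN1 : (1 <= N)%nat) by (destruct N; [simpl in HN; lra | lia]).
  assert (HaN : (a <= N)%nat) by (apply INR_le; lra).
  pose proof (max_drift_le s k N Hs Hs1 HT (proj2 HN)) as HB.
  set (b := C1 / k) in *. set (eta := C2 * eps * s) in *.
  assert (Hb : 0 < b) by (apply Rdiv_lt_0_compat; lra).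
  assert (Hbx : b * x = w) by (unfold b, x, w; field; lra).
  assert (HAs : A * s <= / 4).
  { apply Rmult_lt_compat_l with (r := 4 * A) in HsA; [|lra].
    rewrite Rinv_r in HsA by lra. lra. }
  assert (HA2s : 24 * (A * s) ^ 2 <= w).
  { apply Rmult_lt_compat_l with (r := 24 * A ^ 2) in HsA2; [|nra].
    replace (24 * A ^ 2 * (C1 * M * eps / (24 * A ^ 2))) with (C1 * M * eps) in HsA2
      by (field; lra).
    unfold w. nra. }
  assert (Heta : 0 <= eta) by (unfold eta; repeat apply Rmult_le_pos; lra).
  destruct (hit_before_zero_linear_drift p b eta N a) as [H0 H1];
    [lra | exact Heta | lra | exact HN1 | exact HaN | exact Hp |].
  split; [exact H0|]. eapply Rle_trans; [exact H1|].
  apply exp_le_mono, Ropp_le_contravar.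
  set (m := INR (N - a)).
  assert (Hm : 2 / 3 * x <= m) by (unfold m; rewrite minus_INR by exact HaN; lra).
  assert (Hdrift : / 2 * w <= 2 * b * m - 4 * eta - 8 * (b * INR N + eta) ^ 2).
  { assert (4 / 3 * w <= 2 * b * m) by nra.
    assert (4 * eta <= / 2 * w).
    { unfold eta, w. assert (0 < eps * s) by (apply Rmult_lt_0_compat; lra). nra. }
    assert (0 <= b * INR N + eta) by (pose proof (pos_INR N); nra).
    assert (8 * (b * INR N + eta) ^ 2 <= / 3 * w) by nra.
    lra. }
  replace (c * (s ^ 2 * k)) with (2 / 3 * x * (/ 2 * w)) by (unfold c, x, w; field).
  nra.
Qed.

Lemma scaled_hit_before_zero_le (alpha : R) (p : nat -> R) (k s : R) (N a : nat) :
  0 < alpha -> 1 <= k -> 0 < s -> s < 1 -> s < / (4 * A) -> s < C1 * M * eps / (24 * A ^ 2) ->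
  (Rpower k (- / 2 + alpha) / s) ^ 2 < 1 -> (Rpower k (- / 2 + alpha) / s) ^ 2 < c / 2 ->
  M * eps * s * k <= INR N <= M * eps * s * k + 1 -> INR a <= / 3 * M * eps * s * k ->
  (forall i, (1 <= i)%nat -> p i = / 2 - (C1 / k * INR i - C2 * eps * s)) ->
  0 <= exp (Rpower k (2 * alpha)) * hit_before_zero p N a
    <= 2 / c * (Rpower k (- / 2 + alpha) / s) ^ 2.
Proof.
  intros Halpha Hk Hs Hs1 HsA HsA2 Hr1 Hrc HN Ha Hp.
  pose proof decay_rate_gt0 as Hc.
  assert (HrT : 1 <= Rpower k (2 * alpha)) by (apply Rpower_ge1; lra).
  rewrite (Rpower_two_mul_split alpha k s) in HrT |- * by lra.
  set (r := (Rpower k (- / 2 + alpha) / s) ^ 2) in *.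
  set (T := s ^ 2 * k) in *.
  assert (Hr0 : 0 <= r) by (unfold r; apply pow2_ge_0).
  assert (HT : 1 <= T) by nra.
  destruct (hit_before_zero_decay p s k N a) as [H0 H1]; try assumption.
  split; [apply Rmult_le_pos; [left; apply exp_pos | exact H0]|].
  eapply Rle_trans; [apply Rmult_le_compat_l; [left; apply exp_pos | exact H1]|].
  rewrite <- exp_plus. apply (exp_sub_le r c T); lra.
Qed.

Lemma eventually_scaled_hit_before_zero_le (alpha : R) (sigma : nat -> R) (a : nat -> nat) :
  0 < alpha -> (forall K, 0 < sigma K) -> is_lim_seq sigma 0 ->
  is_lim_seq (fun K => (Rpower (INR K) (- / 2 + alpha) / sigma K) ^ 2) 0 ->
  eventually (fun K => INR (a K) <= / 3 * M * eps * sigma K * INR K) ->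
  eventually (fun K =>
    0 <= exp (Rpower (INR K) (2 * alpha)) *
         hit_before_zero (up_prob C1 C2 eps sigma K)
           (Z.to_nat (Rceil_Z (M * eps * sigma K * INR K))) (a K)
      <= 2 / c * (Rpower (INR K) (- / 2 + alpha) / sigma K) ^ 2).
Proof.
  intros Halpha Hsig Hsig0 Hrho2 Ha.
  pose proof drift_constant_gt0 as HA.
  assert (Hthreshold : 0 < C1 * M * eps / (24 * A ^ 2)).
  { apply Rdiv_lt_0_compat; [repeat apply Rmult_lt_0_compat | ]; nra. }
  pose proof (eventually_lt_of_lim_0 _ _ Hsig0 Rlt_0_1) as Es1.
  pose proof (eventually_lt_of_lim_0 sigma (/ (4 * A)) Hsig0
                ltac:(apply Rinv_0_lt_compat; lra)) as Es2.
  pose proof (eventually_lt_of_lim_0 _ _ Hsig0 Hthreshold) as Es3.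
  pose proof (eventually_lt_of_lim_0 _ _ Hrho2 Rlt_0_1) as Er1.
  pose proof (eventually_lt_of_lim_0 _ (c / 2) Hrho2
                ltac:(pose proof decay_rate_gt0; lra)) as Er2.
  assert (EK : eventually (fun K => (1 <= K)%nat)) by now exists 1%nat.
  generalize (filter_and _ _ (filter_and _ _ EK Ha)
                (filter_and _ _ (filter_and _ _ Es1 (filter_and _ _ Es2 Es3))
                   (filter_and _ _ Er1 Er2))).
  apply filter_imp. intros K ((HK & HaK) & (Hs1 & Hs2 & Hs3) & Hr1 & Hr2).
  apply scaled_hit_before_zero_le; auto.
  - replace 1 with (INR 1) by reflexivity. now apply le_INR.
  - apply Rceil_Z_to_nat_bounds. pose proof (Hsig K). pose proof (pos_INR K).
    repeat apply Rmult_le_pos; lra.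
  - intros i Hi. now apply up_prob_linear_drift.
Qed.

End DecayOfHittingProbability.

Theorem proposition4
  (eps alpha : R) (sigma : nat -> R) (C1 C2 M : R) (a : nat -> nat) :
  0 < eps -> 0 < alpha ->
  (forall K, 0 < sigma K) ->
  (* K^{-1/2+alpha} << sigma_K *)
  is_lim_seq (fun K => Rpower (INR K) (- / 2 + alpha) / sigma K) 0 ->
  (* sigma_K << 1 *)
  is_lim_seq sigma 0 ->
  0 < C1 -> 0 <= C2 ->
  8 * C2 / C1 <= M ->
  (* a = a_K <= (1/3) M eps sigma_K K (for all large K) *)
  (exists K0 : nat, forall K : nat, (K0 <= K)%nat ->
      INR (a K) <= / 3 * M * eps * sigma K * INR K) ->
  is_lim_seq
    (fun K : nat =>
       exp (Rpower (INR K) (2 * alpha)) *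
       hit_before_zero (up_prob C1 C2 eps sigma K)
         (Z.to_nat (Rceil_Z (M * eps * sigma K * INR K))) (a K))
    0.
Proof.
  intros Heps Halpha Hsig Hrho Hsig0 HC1 HC2 HM Ha.
  assert (HM8 : 8 * C2 <= C1 * M).
  { apply Rmult_le_compat_r with (r := C1) in HM; [|lra].
    replace (8 * C2 / C1 * C1) with (8 * C2) in HM by (field; lra). lra. }
  destruct (Rle_lt_or_eq 0 M) as [HMpos | <-]; [nra | |].
  - assert (Hrho2 : is_lim_seq (fun K => (Rpower (INR K) (- / 2 + alpha) / sigma K) ^ 2) 0).
    { replace (Finite 0) with (Finite (0 * 0)) by (f_equal; ring).
      eapply is_lim_seq_ext; [|exact (is_lim_seq_mult' _ _ _ _ Hrho Hrho)].
      intros K. simpl. ring. }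
    eapply is_lim_seq_le_le_loc;
      [apply (eventually_scaled_hit_before_zero_le C1 C2 eps M); assumption
      | apply is_lim_seq_const |].
    replace (Finite 0) with (Rbar_mult (2 / (C1 * M ^ 2 * eps ^ 2 / 3)) 0)
      by (simpl; f_equal; ring).
    now apply is_lim_seq_scal_l.
  - destruct Ha as [K0 Ha].
    apply is_lim_seq_ext_loc with (u := fun _ => 0); [|apply is_lim_seq_const].
    exists K0. intros K HK.
    assert (Ha0 : a K = O).
    { specialize (Ha K HK). destruct (a K) as [|n]; [reflexivity|].
      rewrite S_INR in Ha. pose proof (pos_INR n). lra. }
    rewrite Ha0, hit_before_zero_0. ring.
Qed.
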